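(* Let $X$ be a real normed linear space. Then $$\sup_{f\in S_{X^*}}\operatorname{diam} M_f^+=\mathcal{R}(X),$$ where $M_f^+=\{x\in S_X: f(x)=\|f\|\}$ and $\mathcal{R}(X)=\sup\{\|x-y\|:\ \overline{xy}\subset S_X\}$.
   Context: $S_X$, $S_{X^*}$ are the unit spheres of $X$ and its dual. $\overline{xy}=\{(1-t)x+ty:t\in[0,1]\}$ is the closed segment joining $x$ and $y$. $\operatorname{diam}A=\sup_{a,b\in A}\|a-b\|$. *)

From HB Require Import structures.
From mathcomp Require Import all_boot all_order all_algebra.
From mathcomp Require Import all_classical all_reals all_analysis.
Unset Printing Implicit Defensive.
Import Order.TTheory GRing.Theory Num.Theory.
Import numFieldNormedType.Exports.
Local Open Scope classical_set_scope.
Local Open Scope ring_scope.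

Definition unit_sphere (R : realType) (X : normedModType R) : set X :=
  [set x | `|x| = 1].
Arguments unit_sphere {R} X.

Definition segment (R : realType) (X : normedModType R) (x y : X) : set X :=
  [set (1 - t) *: x + t *: y | t in `[0, 1]%classic].

(* diam A = sup_{a,b in A} ||a - b|| (extended-real; diam of the empty set is -oo). *)
Definition diam (R : realType) (X : normedModType R) (A : set X) : \bar R :=
  ereal_sup [set (`|a - b|)%:E | a in A & b in A].

Definition fnorm (R : realType) (X : normedModType R) (f : X -> R) : \bar R :=
  ereal_sup [set (`|f x|)%:E | x in [set x : X | `|x| <= 1]].

Definition dual_elt (R : realType) (X : normedModType R) (f : X -> R) : Prop :=
  linear (f : X -> R^o) /\ continuous f.

Arguments segment {R X}. Arguments diam {R X}. Arguments fnorm {R X}. Arguments dual_elt {R X}.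

Definition dual_sphere (R : realType) (X : normedModType R) : set (X -> R) :=
  [set f | dual_elt f /\ fnorm f = 1%E].
Arguments dual_sphere {R} X.

Definition Mplus (R : realType) (X : normedModType R) (f : X -> R) : set X :=
  [set x | unit_sphere X x /\ (f x)%:E = fnorm f].

Arguments Mplus {R X}.

Definition calR (R : realType) (X : normedModType R) : \bar R :=
  ereal_sup [set r : \bar R | exists x y : X,
     segment x y `<=` unit_sphere X /\ r = (`|x - y|)%:E].
Arguments calR {R} X.

From HB Require Import structures.
From mathcomp Require Import all_boot all_order all_algebra.
From mathcomp Require Import all_classical all_reals all_analysis.
From mathcomp Require Import lra.
Import Order.TTheory GRing.Theory Num.Theory.
Import numFieldNormedType.Exports.
Local Open Scope classical_set_scope.
Local Open Scope ring_scope.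

(** If [f] is in the dual sphere, then [f] is [1] on [M_f^+] and bounded by the
norm, so on a segment joining two points of [M_f^+] the norm is squeezed
between [f = 1] and the triangle inequality: the segment lies in [S_X].
Conversely, if a segment lies in [S_X], a norming functional at its midpoint
(Hahn-Banach) is at most [1] at both endpoints and averages to [1], so both
endpoints lie in the same [M_f^+]. *)

Section DualSphere.
Context {R : realType} {X : normedModType R}.

Lemma dual_eltD {f : X -> R} : dual_elt f -> {morph f : x y / x + y}.
Proof. by case=> /GRing.semilinear_linear[]. Qed.

Lemma dual_eltZ {f : X -> R} : dual_elt f -> forall a x, f (a *: x) = a * f x.
Proof. by case=> /GRing.semilinear_linear[]. Qed.

Lemma dual_sphere_le_norm {f : X -> R} (x : X) :
  dual_sphere X f -> `|f x| <= `|x|.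
Proof.
move=> [fX f1]; have [->|x0] := eqVneq x 0.
  have f0 : f 0 = 0 by rewrite -(scale0r (0 : X)) dual_eltZ // mul0r.
  by rewrite f0 !normr0.
have nx : 0 < `|x| by rewrite normr_gt0.
have : ((`|f (`|x|^-1 *: x)|)%:E <= fnorm f)%E.
  apply: ereal_sup_ubound; exists (`|x|^-1 *: x) => //=.
  by rewrite normrZ normfV normr_id mulVf ?gt_eqF.
by rewrite f1 lee_fin dual_eltZ // normrM normfV normr_id ler_pdivrMl // mulr1.
Qed.

End DualSphere.

Lemma linear_contraction_continuous (R : numFieldType) (V W : normedModType R)
    (f : V -> W) :
  linear f -> (forall x, `|f x| <= `|x|) -> continuous f.
Proof.
move=> flin fle.
pose fL : {linear V -> W} := HB.pack f (GRing.isLinear.Build R V W *:%R f flin).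
apply: (@bounded_linear_continuous _ _ _ fL); apply/bounded_funP => r.
by exists r => x xr; exact: le_trans (fle x) xr.
Qed.

Section HahnBanach.
Context {R : realType} {X : normedModType R}.

(* A norm-dominated linear functional on a subspace, encoded by its graph so
   that extensions are ordered by inclusion. *)
Definition dominated_graph (G : set (X * R)) :=
  [/\ forall a b, G a -> G b -> G (a.1 + b.1, a.2 + b.2),
      forall k a, G a -> G (k *: a.1, k * a.2) &
      forall a, G a -> a.2 <= `|a.1|].

Lemma dominated_graph_uniq (G : set (X * R)) (x : X) (r s : R) :
  dominated_graph G -> G (x, r) -> G (x, s) -> r = s.
Proof.
move=> [GD GZ Gn] Gr Gs.
have /= := Gn _ (GD _ _ Gr (GZ (-1) _ Gs)).
have /= := Gn _ (GD _ _ Gs (GZ (-1) _ Gr)).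
rewrite !scaleN1r !subrr normr0 !mulN1r !subr_le0 => sr rs.
by apply/le_anti; rewrite sr rs.
Qed.

Lemma dominated_graph_bigcup (F : set (set (X * R))) :
  F `<=` dominated_graph -> total_on F subset ->
  dominated_graph (\bigcup_(G in F) G).
Proof.
move=> Fdom Ftot; split.
- move=> a b [G FG Ga] [H FH Hb].
  have [GH|HG] := Ftot _ _ FG FH.
  + by have [HD _ _] := Fdom H FH; exists H => //; apply: HD => //; exact: GH.
  + by have [GD _ _] := Fdom G FG; exists G => //; apply: GD => //; exact: HG.
- move=> k a [G FG Ga]; have [_ GZ _] := Fdom G FG.
  by exists G => //; exact: GZ.
- by move=> a [G FG Ga]; have [_ _ Gn] := Fdom G FG; exact: Gn.
Qed.

Definition graph_adjoin (A : set (X * R)) (z : X) (c : R) : set (X * R) :=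
  [set (a.1 + t *: z, a.2 + t * c) | a in A & t in [set: R]].

Lemma normDZ_pos (k : R) (v w : X) :
  0 < k -> `|v + k *: w| = k * `|k^-1 *: v + w|.
Proof.
move=> k0; rewrite -[v in LHS](scalerKV (lt0r_neq0 k0)) -scalerDr normrZ.
by rewrite gtr0_norm.
Qed.

Lemma dominated_graph_adjoin (A : set (X * R)) (z : X) (c : R) :
  dominated_graph A ->
  (forall a, A a -> a.2 - `|a.1 - z| <= c <= `|a.1 + z| - a.2) ->
  dominated_graph (graph_adjoin A z c).
Proof.
move=> [AD AZ An] cA; split.
- move=> _ _ [a Aa [t _ <-]] [b Ab [s _ <-]].
  exists (a.1 + b.1, a.2 + b.2); first exact: AD.
  exists (t + s) => //; rewrite /= scalerDl mulrDl.
  by congr (_, _); exact: addrACA.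
- move=> k _ [a Aa [t _ <-]]; exists (k *: a.1, k * a.2); first exact: AZ.
  by exists (k * t) => //; rewrite /= scalerDr mulrDr scalerA mulrA.
- move=> _ [a Aa [t _ <-]] /=.
  have [t0|t0|->] := ltgtP t 0; last by rewrite scale0r mul0r !addr0; exact: An.
  + have nt0 : 0 < - t by rewrite oppr_gt0.
    have /andP[+ _] := cA _ (AZ (- t)^-1 _ Aa).
    rewrite /= -(ler_pM2l nt0) mulrBr mulrA mulfV ?gt_eqF // mul1r.
    have -> : t *: z = (- t) *: (- z) by rewrite scaleNr scalerN opprK.
    by rewrite normDZ_pos //; lra.
  + have /andP[_] := cA _ (AZ t^-1 _ Aa).
    rewrite /= -(ler_pM2l t0) mulrBr mulrA mulfV ?gt_eqF // mul1r.
    by rewrite normDZ_pos //; lra.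
Qed.

Lemma dominated_graph_extend (A : set (X * R)) (z : X) :
  dominated_graph A -> A !=set0 ->
  exists2 B, dominated_graph B & A `<=` B /\ exists c, B (z, c).
Proof.
move=> Adom [a0 Aa0]; have [AD AZ An] := Adom.
(* the value at [z] must lie between these two families of bounds *)
have gap a b : A a -> A b -> a.2 - `|a.1 - z| <= `|b.1 + z| - b.2.
  move=> Aa Ab; have /= := An _ (AD _ _ Aa Ab).
  have := ler_normD (a.1 - z) (b.1 + z); rewrite addrACA addNr addr0; lra.
pose S := [set a.2 - `|a.1 - z| | a in A].
have S0 : S !=set0 by exists (a0.2 - `|a0.1 - z|); exists a0.
have Sub : has_ubound S.
  by exists (`|a0.1 + z| - a0.2) => _ [a Aa <-]; exact: gap.
exists (graph_adjoin A z (sup S)).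
  apply: dominated_graph_adjoin => // a Aa; apply/andP; split.
    by apply: ub_le_sup => //; exists a.
  by apply: ge_sup => // _ [b Ab <-]; exact: gap.
split=> [a Aa|].
  by exists a => //; exists 0; rewrite // scale0r mul0r !addr0 -surjective_pairing.
exists (sup S); exists (0, 0); last by exists 1; rewrite //= scale1r mul1r !add0r.
by have := AZ 0 _ Aa0; rewrite scale0r mul0r.
Qed.

Lemma dominated_graph_total (A0 : set (X * R)) :
  dominated_graph A0 -> A0 !=set0 ->
  exists2 A, dominated_graph A & A0 `<=` A /\ forall z, exists r, A (z, r).
Proof.
move=> A0dom [a0 Aa0].
(* [A0 `<=` G] only for nonempty [G]: the empty chain has an empty union. *)
pose P G := dominated_graph G /\ (G !=set0 -> A0 `<=` G).
have [A [[Adom A0A] Amax]] : exists A, P A /\ forall B, A `<` B -> ~ P B.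
  apply: Zorn_bigcup => F FP Ftot; split.
    by apply: dominated_graph_bigcup => // G /FP[].
  move=> [a [G FG Ga]]; apply: subset_trans (bigcup_sup FG).
  by apply: (FP G FG).2; exists a.
have [A0' |/set0P An] := eqVneq A set0.
  exfalso; apply: (Amax A0); last by split => // _ x.
  by rewrite A0'; split=> [x|/(_ _ Aa0)].
have {A0A}A0A := A0A An; exists A => //; split => // z.
apply: contrapT => nz.
have [B Bdom [AB [c Bzc]]] := dominated_graph_extend _ z Adom An.
apply: (Amax B); last by split => // _; exact: subset_trans AB.
by split => // BA; apply: nz; exists c; exact: BA.
Qed.

Lemma dominated_graph_function (A : set (X * R)) :
  dominated_graph A -> (forall z, exists r, A (z, r)) ->
  exists f : X -> R,
    [/\ linear (f : X -> R^o), forall x, `|f x| <= `|x| & forall x, A (x, f x)].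
Proof.
move=> Adom Atot; have [AD AZ An] := Adom.
pose f x := xget 0 [set r | A (x, r)].
have fA x : A (x, f x) by exact: xgetPex (Atot x).
exists f; split => // [a u v|x].
  by apply: dominated_graph_uniq Adom (fA _) (AD _ _ (AZ a _ (fA u)) (fA v)).
rewrite ler_norml (An _ (fA x)) andbT lerNl.
by have := An _ (AZ (-1) _ (fA x)); rewrite /= scaleN1r normrN mulN1r.
Qed.

Lemma dominated_graph_line (m : X) :
  dominated_graph [set (t *: m, t * `|m|) | t in [set: R]].
Proof.
split.
- by move=> _ _ [t _ <-] [s _ <-]; exists (t + s); rewrite // scalerDl mulrDl.
- by move=> k _ [t _ <-]; exists (k * t); rewrite // scalerA mulrA.
- by move=> _ [t _ <-] /=; rewrite normrZ ler_wpM2r // ler_norm.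
Qed.

Lemma norming_functional (m : X) :
  m != 0 -> exists2 f, dual_sphere X f & f m = `|m|.
Proof.
move=> m0; have nm : 0 < `|m| by rewrite normr_gt0.
pose L := [set (t *: m, t * `|m|) | t in [set: R]].
have L0 : L !=set0 by exists (1 *: m, 1 * `|m|); exists 1.
have [A Adom [LA Atot]] := dominated_graph_total _ (dominated_graph_line m) L0.
have [f [flin fle fA]] := dominated_graph_function _ Adom Atot.
have fm : f m = `|m|.
  apply: dominated_graph_uniq Adom (fA m) (LA _ _).
  by exists 1; rewrite // scale1r mul1r.
exists f => //; split.
  by split => //; exact: linear_contraction_continuous.
apply/le_anti/andP; split.
  apply: ge_ereal_sup => _ [x /= x1 <-].
  by rewrite lee_fin; exact: le_trans (fle x) x1.
apply: ereal_sup_ubound; exists (`|m|^-1 *: m) => /=.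
  by rewrite normrZ normfV normr_id mulVf ?gt_eqF.
have -> : f (`|m|^-1 *: m) = 1.
  by rewrite (GRing.semilinear_linear flin).1 fm; exact: mulVf (lt0r_neq0 nm).
by rewrite normr1.
Qed.

End HahnBanach.

Section SphereFaces.
Context {R : realType} {X : normedModType R}.

Lemma segment_left (x y : X) : segment x y x.
Proof.
by exists 0; rewrite /= ?in_itv /= ?lexx ?ler01 // subr0 scale1r scale0r addr0.
Qed.

Lemma segment_right (x y : X) : segment x y y.
Proof.
by exists 1; rewrite /= ?in_itv /= ?lexx ?ler01 // subrr scale1r scale0r add0r.
Qed.

Lemma Mplus_segment_sphere (f : X -> R) (a b : X) :
  dual_sphere X f -> Mplus f a -> Mplus f b -> segment a b `<=` unit_sphere X.
Proof.
move=> fS [a1 fa] [b1 fb] _ [t /= t01 <-]; move: t01; rewrite in_itv /=.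
move=> /andP[t0 t1]; have [fX f1] := fS; rewrite f1 in fa fb.
case: fa => fa; case: fb => fb; apply/le_anti/andP; split.
  apply: le_trans (ler_normD _ _) _.
  by rewrite !normrZ a1 b1 !mulr1 !ger0_norm ?subr_ge0 // subrK.
have := dual_sphere_le_norm ((1 - t) *: a + t *: b) fS.
by rewrite (dual_eltD fX) !(dual_eltZ fX) fa fb !mulr1 subrK normr1.
Qed.

Lemma sphere_segment_Mplus (x y : X) :
  segment x y `<=` unit_sphere X ->
  exists2 f, dual_sphere X f & Mplus f x /\ Mplus f y.
Proof.
move=> xyS; have x1 := xyS x (segment_left x y).
have y1 := xyS y (segment_right x y).
have h01 : `[0, 1]%classic (2^-1 : R).
  by rewrite /= in_itv /= invr_ge0 ler0n invf_le1 ?ler1n.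
have m1 : `|(1 - 2^-1) *: x + 2^-1 *: y| = 1 by apply: xyS; exists 2^-1.
have [|f fS] := norming_functional ((1 - 2^-1) *: x + 2^-1 *: y).
  by rewrite -normr_eq0 m1 oner_eq0.
have [fX f1] := fS; rewrite m1 (dual_eltD fX) !(dual_eltZ fX) => fm.
have fx : f x <= 1.
  by rewrite -x1; exact: le_trans (ler_norm _) (dual_sphere_le_norm _ fS).
have fy : f y <= 1.
  by rewrite -y1; exact: le_trans (ler_norm _) (dual_sphere_le_norm _ fS).
by exists f => //; split; split => //; rewrite f1; congr (_%:E); lra.
Qed.

End SphereFaces.

Theorem theorem2p9 (R : realType) (X : normedModType R) :
  ereal_sup [set diam (Mplus f) | f in dual_sphere X] = calR X.
Proof.
apply/le_anti/andP; split.
  apply: ge_ereal_sup => _ [f fS <-]; apply: ge_ereal_sup => _ [a Ma [b Mb <-]].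
  apply: ereal_sup_ubound; exists a, b; split => //.
  exact: Mplus_segment_sphere Mb.
apply: ge_ereal_sup => _ [x [y [xyS ->]]].
have [f fS [Mx My]] := sphere_segment_Mplus _ _ xyS.
apply: (@le_trans _ _ (diam (Mplus f))); apply: ereal_sup_ubound.
  by exists x => //; exists y.
by exists f.
Qed.
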